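(* Let $\gamma_1,\gamma_2\in\Psi^+$ be orthogonal roots such that $\{\gamma_1,\gamma_2\}$ is contained in some admissible subset of $\Psi^+$. Then $e_{\gamma_1}e_{\gamma_2}=e_{\gamma_2}e_{\gamma_1}$ in $\mathrm{Br}(\mathrm{F}_4)$.
   Context: $\mathrm{Br}(\mathrm{F}_4)$ is the unital associative $\mathbb Z[\delta^{\pm1}]$-algebra ($\delta$ an indeterminate) generated by $r_1,\dots,r_4,e_1,\dots,e_4$ subject to: $r_i^2=1$, $r_ie_i=e_ir_i=e_i$ for all $i$; $e_i^2=\delta e_i$ for $i\in\{3,4\}$; $e_i^2=\delta^2e_i$ for $i\in\{1,2\}$; for $\{i,j\}\in\{\{1,3\},\{1,4\},\{2,4\}\}$: $r_ir_j=r_jr_i$, $e_ir_j=r_je_i$, $e_ie_j=e_je_i$; for $(i,j)\in\{(1,2),(2,1),(3,4),(4,3)\}$: $r_ir_jr_i=r_jr_ir_j$, $r_jr_ie_j=e_ie_j$, $r_ie_jr_i=r_je_ir_j$; and $r_2r_3r_2r_3=r_3r_2r_3r_2$, $r_2r_3e_2=r_3e_2$, $r_2e_3r_2e_3=e_3e_2e_3$, $(r_2r_3r_2)e_3=e_3(r_2r_3r_2)$, $e_2r_3e_2=\delta e_2$, $e_2e_3e_2=\delta e_2$, $e_2r_3r_2=e_2r_3$, $e_2e_3r_2=e_2e_3$. Roots: $\epsilon_1,\dots,\epsilon_4$ standard basis of $\mathbb R^4$; $\beta_1=\frac12(\epsilon_1-\epsilon_2-\epsilon_3-\epsilon_4)$,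 $\beta_2=\epsilon_2$, $\beta_3=\epsilon_3-\epsilon_2$, $\beta_4=\epsilon_4-\epsilon_3$; $\Psi=\{\pm\epsilon_i\}\cup\{\pm\epsilon_i\pm\epsilon_j:i<j\}\cup\{\frac12(\pm\epsilon_1\pm\epsilon_2\pm\epsilon_3\pm\epsilon_4)\}$ with positive roots $\Psi^+$ = roots that are nonnegative combinations of the $\beta_i$; a root and its negative are identified when naming positive roots. $W=W(\mathrm{F}_4)$ is generated by $s_i=s_{\beta_i}$, identified with its image in $\mathrm{Br}(\mathrm{F}_4)$ via $s_i\mapsto r_i$; $W$ acts on $\Psi^+$ by $w\cdot\beta=$ the positive one of $\pm w\beta$. For $\beta\in\Psi^+$, $e_\beta:=we_iw^{-1}$ for any $w\in W$, $i\in\{1,\dots,4\}$ with $w\beta_i=\beta$ (this is well defined). Admissible sets: let $\Phi$ be the $\mathrm{E}_6$ root system in a Euclidean space $V$ with simple roots $\alpha_1,\dots,\alpha_6$ of squared length $2$, $(\alpha_i,\alpha_j)=-1$ for $\{i,j\}\in\{\{1,3\},\{3,4\},\{4,5\},\{5,6\},\{2,4\}\}$ and $0$ for other $i\ne j$, positive roots $\Phi^+$. $B\subseteq\Phi^+$ is admissible if its elements are mutually orthogonal and whenever $\gamma_1,\gamma_2,\gamma_3\in B$ are distinct and $\gamma\in\Phi$ has $(\gamma,\gamma_k)\in\{\pm1\}$ ($k=1,2,3$), the positive one of $\pm(2\gamma-\sum_k(\gamma,\gamma_k)\gamma_k)$ lies in $B$. With $\mathfrak p:V\to\mathbb R^4$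 linear, $\mathfrak p(\alpha_1)=\mathfrak p(\alpha_6)=\beta_1$, $\mathfrak p(\alpha_3)=\mathfrak p(\alpha_5)=\beta_2$, $\mathfrak p(\alpha_4)=\beta_3$, $\mathfrak p(\alpha_2)=\beta_4$, a set $X\subseteq\Psi^+$ of mutually orthogonal roots is admissible if $\mathfrak p^{-1}(X)\cap\Phi^+$ is admissible. *)

From mathcomp Require Import all_boot all_order all_algebra.
Set Implicit Arguments. Unset Strict Implicit. Unset Printing Implicit Defensive.
Import Order.TTheory GRing.Theory Num.Theory.
Local Open Scope ring_scope.

(* The F4 root system Psi in R^4 (all roots have rational coordinates) *)

Record vec4 := V4 { c1 : rat; c2 : rat; c3 : rat; c4 : rat }.

Definition add4 (u v : vec4) : vec4 :=
  V4 (c1 u + c1 v) (c2 u + c2 v) (c3 u + c3 v) (c4 u + c4 v).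
Definition scale4 (a : rat) (v : vec4) : vec4 :=
  V4 (a * c1 v) (a * c2 v) (a * c3 v) (a * c4 v).
Definition opp4 (v : vec4) : vec4 := scale4 (-1) v.
Definition zero4 : vec4 := V4 0 0 0 0.
Definition dot4 (u v : vec4) : rat :=
  c1 u * c1 v + c2 u * c2 v + c3 u * c3 v + c4 u * c4 v.

(* standard basis epsilon_1..epsilon_4 (indexed by 'I_4 = {0,..,3}) *)
Definition eps (i : 'I_4) : vec4 :=
  V4 (i == 0 :> nat)%:R (i == 1 :> nat)%:R (i == 2 :> nat)%:R (i == 3 :> nat)%:R.

Definition sign (s : rat) : Prop := s = 1 \/ s = -1.

Definition rootF4 (v : vec4) : Prop :=
  (exists (i : 'I_4) s, sign s /\ v = scale4 s (eps i)) \/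
  (exists (i j : 'I_4) s t, (i < j)%N /\ sign s /\ sign t /\
      v = add4 (scale4 s (eps i)) (scale4 t (eps j))) \/
  (exists s1 s2 s3 s4, sign s1 /\ sign s2 /\ sign s3 /\ sign s4 /\
      v = V4 (s1 / 2%:R) (s2 / 2%:R) (s3 / 2%:R) (s4 / 2%:R)).

(* simple roots beta_1..beta_4 (indices 1..4; other indices give 0) *)
Definition beta (i : nat) : vec4 :=
  match i with
  | 1 => V4 (1 / 2%:R) (- (1 / 2%:R)) (- (1 / 2%:R)) (- (1 / 2%:R))
  | 2 => V4 0 1 0 0
  | 3 => V4 0 (-1) 1 0
  | 4 => V4 0 0 (-1) 1
  | _ => zero4
  end%N.

Definition posRootF4 (v : vec4) : Prop :=
  rootF4 v /\
  exists a1 a2 a3 a4 : rat, 0 <= a1 /\ 0 <= a2 /\ 0 <= a3 /\ 0 <= a4 /\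
    v = add4 (add4 (scale4 a1 (beta 1)) (scale4 a2 (beta 2)))
             (add4 (scale4 a3 (beta 3)) (scale4 a4 (beta 4))).

Definition refl4 (b v : vec4) : vec4 :=
  add4 v (scale4 (- (2%:R * dot4 v b / dot4 b b)) b).

Definition valid_word (w : seq nat) : bool := all (fun i => (1 <= i <= 4)%N) w.

(* action of w = s_{i1} ... s_{ik} (word [:: i1; ...; ik]) on R^4 *)
Definition actW (w : seq nat) (v : vec4) : vec4 :=
  foldr (fun i x => refl4 (beta i) x) v w.

(* The E6 root system Phi, in coordinates w.r.t. alpha_1..alpha_6      *)

Record vec6 := V6 { d1 : int; d2 : int; d3 : int; d4 : int; d5 : int; d6 : int }.

Definition add6 (u v : vec6) : vec6 :=
  V6 (d1 u + d1 v) (d2 u + d2 v) (d3 u + d3 v) (d4 u + d4 v) (d5 u + d5 v) (d6 u + d6 v).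
Definition scale6 (a : int) (v : vec6) : vec6 :=
  V6 (a * d1 v) (a * d2 v) (a * d3 v) (a * d4 v) (a * d5 v) (a * d6 v).
Definition opp6 (v : vec6) : vec6 := scale6 (-1) v.

(* bilinear form: (alpha_i,alpha_i)=2, (alpha_i,alpha_j)=-1 for
   {i,j} in {{1,3},{3,4},{4,5},{5,6},{2,4}}, 0 otherwise *)
Definition dot6 (u v : vec6) : int :=
  2%:Z * (d1 u * d1 v + d2 u * d2 v + d3 u * d3 v + d4 u * d4 v + d5 u * d5 v + d6 u * d6 v)
  - (d1 u * d3 v + d3 u * d1 v) - (d3 u * d4 v + d4 u * d3 v)
  - (d4 u * d5 v + d5 u * d4 v) - (d5 u * d6 v + d6 u * d5 v)
  - (d2 u * d4 v + d4 u * d2 v).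

Definition alpha (i : nat) : vec6 :=
  match i with
  | 1 => V6 1 0 0 0 0 0
  | 2 => V6 0 1 0 0 0 0
  | 3 => V6 0 0 1 0 0 0
  | 4 => V6 0 0 0 1 0 0
  | 5 => V6 0 0 0 0 1 0
  | 6 => V6 0 0 0 0 0 1
  | _ => V6 0 0 0 0 0 0
  end%N.

Definition refl6 (b v : vec6) : vec6 := add6 v (scale6 (- dot6 v b) b).

Inductive rootE6 : vec6 -> Prop :=
  | rootE6_simple i : (1 <= i <= 6)%N -> rootE6 (alpha i)
  | rootE6_refl i v : (1 <= i <= 6)%N -> rootE6 v -> rootE6 (refl6 (alpha i) v).

Definition posRootE6 (v : vec6) : Prop :=
  rootE6 v /\ 0 <= d1 v /\ 0 <= d2 v /\ 0 <= d3 v /\ 0 <= d4 v /\ 0 <= d5 v /\ 0 <= d6 v.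

Definition pm1 (z : int) : Prop := z = 1 \/ z = -1.

Definition admissibleE6 (B : vec6 -> Prop) : Prop :=
  (forall x, B x -> posRootE6 x) /\
  (forall x y, B x -> B y -> x <> y -> dot6 x y = 0) /\
  (forall g1 g2 g3 g, B g1 -> B g2 -> B g3 ->
     g1 <> g2 -> g1 <> g3 -> g2 <> g3 -> rootE6 g ->
     pm1 (dot6 g g1) -> pm1 (dot6 g g2) -> pm1 (dot6 g g3) ->
     let v := add6 (scale6 2%:Z g)
                (opp6 (add6 (scale6 (dot6 g g1) g1)
                      (add6 (scale6 (dot6 g g2) g2) (scale6 (dot6 g g3) g3)))) in
     forall d, (d = v \/ d = opp6 v) -> posRootE6 d -> B d).

Definition projE6F4 (v : vec6) : vec4 :=
  add4 (add4 (scale4 (d1 v + d6 v)%:~R (beta 1)) (scale4 (d3 v + d5 v)%:~R (beta 2)))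
       (add4 (scale4 (d4 v)%:~R (beta 3)) (scale4 (d2 v)%:~R (beta 4))).

Definition admissibleF4 (X : vec4 -> Prop) : Prop :=
  (forall x, X x -> posRootF4 x) /\
  (forall x y, X x -> X y -> x <> y -> dot4 x y = 0) /\
  admissibleE6 (fun v => posRootE6 v /\ X (projE6F4 v)).

Definition BrF4_rels (R : pzRingType) (delta : R) (r e : nat -> R) : Prop :=
  (forall i, (1 <= i <= 4)%N ->
     r i * r i = 1 /\ r i * e i = e i /\ e i * r i = e i) /\
  e 3%N * e 3%N = delta * e 3%N /\ e 4%N * e 4%N = delta * e 4%N /\
  e 1%N * e 1%N = delta ^+ 2 * e 1%N /\ e 2%N * e 2%N = delta ^+ 2 * e 2%N /\
  (forall i j, (i, j) \in [:: (1, 3); (3, 1); (1, 4); (4, 1); (2, 4); (4, 2)]%N ->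
     r i * r j = r j * r i /\ e i * r j = r j * e i /\ e i * e j = e j * e i) /\
  (forall i j, (i, j) \in [:: (1, 2); (2, 1); (3, 4); (4, 3)]%N ->
     r i * r j * r i = r j * r i * r j /\
     r j * r i * e j = e i * e j /\
     r i * e j * r i = r j * e i * r j) /\
  r 2%N * r 3%N * r 2%N * r 3%N = r 3%N * r 2%N * r 3%N * r 2%N /\
  r 2%N * r 3%N * e 2%N = r 3%N * e 2%N /\
  r 2%N * e 3%N * r 2%N * e 3%N = e 3%N * e 2%N * e 3%N /\
  (r 2%N * r 3%N * r 2%N) * e 3%N = e 3%N * (r 2%N * r 3%N * r 2%N) /\
  e 2%N * r 3%N * e 2%N = delta * e 2%N /\
  e 2%N * e 3%N * e 2%N = delta * e 2%N /\
  e 2%N * r 3%N * r 2%N = e 2%N * r 3%N /\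
  e 2%N * e 3%N * r 2%N = e 2%N * e 3%N.

Definition wordR (R : pzRingType) (r : nat -> R) (w : seq nat) : R :=
  \prod_(i <- w) r i.

(* e_beta := w e_i w^{-1} where w beta_i = beta *)
Definition eRoot (R : pzRingType) (r e : nat -> R) (w : seq nat) (i : nat) : R :=
  wordR r w * e i * wordR r (rev w).

From mathcomp Require Import all_boot all_order all_algebra.
From mathcomp Require Import lra.
Import Order.TTheory GRing.Theory Num.Theory.
Set Implicit Arguments. Unset Strict Implicit. Unset Printing Implicit Defensive.

(* All identities in Br(F4) needed here are equalities between words in the
   generators r_j, e_j obtained by rewriting with the defining relations, read
   as oriented rules lhs -> delta^d rhs.  Such derivations are recorded as
   certificates (lists of rewrite steps); [certOK_sound] shows that a checked
   certificate gives a true identity in every ring satisfying the relations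
   with delta a central unit.

   The 48 roots of F4 are tabulated together with a word for each e_beta
   (beta positive).  Certificates for r_j e_beta r_j = e_{s_j beta} give, by
   induction on w, that w e_i w^{-1} is the tabulated element of the root
   w beta_i ([eRoot_tabulated]).  Two orthogonal pairs are certified to
   commute directly and all further listed pairs are reached from them by
   conjugation ([listed_pairs_commute]).  A finite check shows that every
   orthogonal pair of positive roots is listed, unless it has two
   non-orthogonal positive lifts to E6, in which case it lies in no admissible
   set ([lift_witnessed_not_admissible]). *)

Definition letter := (bool * nat)%type.
Definition rl (j : nat) : letter := (true, j).
Definition el (j : nat) : letter := (false, j).

Section WordValue.
Local Open Scope ring_scope.
Variables (R : pzRingType) (r e : nat -> R).

Definition wordv (w : seq letter) : R :=
  \prod_(l <- w) (if l.1 then r l.2 else e l.2).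

Lemma wordv_cat u v : wordv (u ++ v) = wordv u * wordv v.
Proof. by rewrite /wordv big_cat. Qed.

Lemma wordv_conj j w : wordv (rl j :: w ++ [:: rl j]) = r j * wordv w * r j.
Proof. by rewrite /wordv big_cons big_cat big_seq1 /= mulrA. Qed.
End WordValue.

(* An oriented relation (lhs, rhs, d), meaning lhs = delta^d rhs. *)
Definition rule := (seq letter * seq letter * nat)%type.

Definition unit_rules (i : nat) : seq rule :=
  [:: ([:: rl i; rl i], [::], 0); ([:: rl i; el i], [:: el i], 0);
      ([:: el i; rl i], [:: el i], 0)]%N.

Definition square_rules : seq rule :=
  [:: ([:: el 3; el 3], [:: el 3], 1); ([:: el 4; el 4], [:: el 4], 1);
      ([:: el 1; el 1], [:: el 1], 2); ([:: el 2; el 2], [:: el 2], 2)]%N.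

Definition comm_pairs : seq (nat * nat) := [:: (1, 3); (3, 1); (1, 4); (4, 1); (2, 4); (4, 2)]%N.

Definition comm_rules (p : nat * nat) : seq rule :=
  let: (i, j) := p in
  [:: ([:: rl i; rl j], [:: rl j; rl i], 0); ([:: el i; rl j], [:: rl j; el i], 0);
      ([:: el i; el j], [:: el j; el i], 0)]%N.

Definition braid_pairs : seq (nat * nat) := [:: (1, 2); (2, 1); (3, 4); (4, 3)]%N.

Definition braid_rules (p : nat * nat) : seq rule :=
  let: (i, j) := p in
  [:: ([:: rl i; rl j; rl i], [:: rl j; rl i; rl j], 0);
      ([:: rl j; rl i; el j], [:: el i; el j], 0);
      ([:: rl i; el j; rl i], [:: rl j; el i; rl j], 0)]%N.

Definition mixed_rules : seq rule :=
  [:: ([:: rl 2; rl 3; rl 2; rl 3], [:: rl 3; rl 2; rl 3; rl 2], 0);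
      ([:: rl 2; rl 3; el 2], [:: rl 3; el 2], 0);
      ([:: rl 2; el 3; rl 2; el 3], [:: el 3; el 2; el 3], 0);
      ([:: rl 2; rl 3; rl 2; el 3], [:: el 3; rl 2; rl 3; rl 2], 0);
      ([:: el 2; rl 3; el 2], [:: el 2], 1);
      ([:: el 2; el 3; el 2], [:: el 2], 1);
      ([:: el 2; rl 3; rl 2], [:: el 2; rl 3], 0);
      ([:: el 2; el 3; rl 2], [:: el 2; el 3], 0)]%N.

(* The rule list; certificates refer to rules by their position in it. *)
Definition rules : seq rule :=
  flatten (map unit_rules (iota 1 4)) ++ square_rules ++
  flatten (map comm_rules comm_pairs) ++ flatten (map braid_rules braid_pairs) ++
  mixed_rules.

Section RuleSoundness.
Local Open Scope ring_scope.
Variables (R : pzRingType) (delta : R) (r e : nat -> R).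
Hypothesis hrels : BrF4_rels delta r e.

Definition rule_holds (x : rule) : Prop := wordv r e x.1.1 = delta ^+ x.2 * wordv r e x.1.2.

Definition all_hold (s : seq rule) : Prop := foldr (fun x P => rule_holds x /\ P) True s.

Lemma all_holdP s : all_hold s -> {in s, forall x, rule_holds x}.
Proof.
elim: s => //= y s IH [Hy Hs] x; rewrite inE => /orP [/eqP -> //|].
exact: IH.
Qed.

Lemma unit_rules_hold i : (1 <= i <= 4)%N -> all_hold (unit_rules i).
Proof.
case: hrels => Hu _ /Hu [Hrr [Hre Her]].
by rewrite /= /rule_holds /wordv /= !(big_cons, big_nil) /= !expr0 !mul1r !mulr1.
Qed.

Lemma square_rules_hold : all_hold square_rules.
Proof.
case: hrels => _ [He3 [He4 [He1 [He2 _]]]].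
by rewrite /= /rule_holds /wordv /= !(big_cons, big_nil) /= !expr1 !mulr1.
Qed.

Lemma comm_rules_hold p : p \in comm_pairs -> all_hold (comm_rules p).
Proof.
case: p => i j; case: hrels => _ [_ [_ [_ [_ [Hc _]]]]] /Hc [Hrr [Her Hee]].
by rewrite /= /rule_holds /wordv /= !(big_cons, big_nil) /= !expr0 !mul1r !mulr1.
Qed.

Lemma braid_rules_hold p : p \in braid_pairs -> all_hold (braid_rules p).
Proof.
case: p => i j; case: hrels => _ [_ [_ [_ [_ [_ [Hb _]]]]]] /Hb [Hrrr [Hrre Hrer]].
by rewrite /= /rule_holds /wordv /= !(big_cons, big_nil) /= !expr0 !mul1r !mulr1 !mulrA.
Qed.

Lemma mixed_rules_hold : all_hold mixed_rules.
Proof.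
case: hrels => _ [_ [_ [_ [_ [_ [_ [H1 [H2 [H3 [H4 [H5 [H6 [H7 H8]]]]]]]]]]]]].
rewrite !mulrA in H4.
by rewrite /= /rule_holds /wordv /= !(big_cons, big_nil) /= !expr0 !expr1 !mul1r !mulr1 !mulrA.
Qed.

Lemma all_hold_cat s1 s2 : all_hold s1 -> all_hold s2 -> all_hold (s1 ++ s2).
Proof. by elim: s1 => //= x s1 IH [Hx Hs1] Hs2; split; last exact: IH. Qed.

Lemma all_hold_flatten (T : eqType) (f : T -> seq rule) s :
  {in s, forall p, all_hold (f p)} -> all_hold (flatten (map f s)).
Proof.
elim: s => //= p s IH Hs; apply: all_hold_cat; first by apply: Hs; exact: mem_head.
by apply: IH => q Hq; apply: Hs; rewrite inE Hq orbT.
Qed.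

Lemma rules_hold x : x \in rules -> rule_holds x.
Proof.
apply: all_holdP; apply: all_hold_cat.
  by apply: all_hold_flatten => i; rewrite mem_iota; exact: unit_rules_hold.
apply: all_hold_cat; first exact: square_rules_hold.
apply: all_hold_cat; first exact: all_hold_flatten comm_rules_hold.
by apply: all_hold_cat; [exact: all_hold_flatten braid_rules_hold | exact: mixed_rules_hold].
Qed.

End RuleSoundness.

(* A rewrite step (p, n, fw): apply rule n at position p, forwards (lhs to rhs)
   if fw, backwards otherwise. *)
Definition step := (nat * nat * bool)%type.

(* Rule indices out of range denote the trivial rule, which holds everywhere. *)
Definition trivial_rule : rule := ([::], [::], 0%N).

Definition apply_step (w : seq letter) (s : step) : option (seq letter * nat * bool) :=
  let: (p, n, fw) := s in
  let: (lhs, rhs, d) := nth trivial_rule rules n in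
  let from := if fw then lhs else rhs in
  let to := if fw then rhs else lhs in
  if take (size from) (drop p w) == from
  then Some (take p w ++ to ++ drop (size from + p) w, d, fw) else None.

(* Run a certificate on w; a and b accumulate the powers of delta produced on the
   source and target sides, keeping delta^a src = delta^b w invariant. *)
Fixpoint run (w : seq letter) (a b : nat) (st : seq step) : option (seq letter * nat * nat) :=
  match st with
  | [::] => Some (w, a, b)
  | s :: st' =>
      match apply_step w s with
      | Some (w', d, true) => run w' a (b + d) st'
      | Some (w', d, false) => run w' (a + d) b st'
      | None => None
      end
  end.

Definition certOK (src tgt : seq letter) (st : seq step) : bool :=
  if run src 0 0 st is Some (w, a, b) then (w == tgt) && (a == b) else false.

Section CertificateSoundness.
Local Open Scope ring_scope.
Variables (R : pzRingType) (delta : R) (r e : nat -> R).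
Hypothesis hunit : exists dinv : R, delta * dinv = 1 /\ dinv * delta = 1.
Hypothesis hcentral : forall x : R, delta * x = x * delta.
Hypothesis hrels : BrF4_rels delta r e.
Local Notation wv := (wordv r e).

Lemma nth_rule_holds n : rule_holds delta r e (nth trivial_rule rules n).
Proof.
have [Hn|Hn] := ltnP n (size rules); first exact/(rules_hold hrels)/mem_nth.
by rewrite nth_default // /rule_holds /= expr0 mul1r.
Qed.

Lemma deltaX_comm n x : delta ^+ n * x = x * delta ^+ n.
Proof. by symmetry; apply: commrX; rewrite /GRing.comm hcentral. Qed.

Lemma deltaX_cancel n x y : delta ^+ n * x = delta ^+ n * y -> x = y.
Proof.
case: hunit => dinv [_ Hdinv] Hxy.
have Hinv : dinv ^+ n * delta ^+ n = 1.
  by rewrite -exprMn_comm ?Hdinv ?expr1n // /GRing.comm hcentral.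
by rewrite -[x]mul1r -[y]mul1r -Hinv -!mulrA Hxy.
Qed.

Lemma apply_step_sound w s w' d fw : apply_step w s = Some (w', d, fw) ->
  if fw then wv w = delta ^+ d * wv w' else wv w' = delta ^+ d * wv w.
Proof.
case: s => [[p n] fw0]; rewrite /apply_step.
have := nth_rule_holds n; case: (nth trivial_rule rules n) => [[lhs rhs] d0] Hrule.
case: ifP => // /eqP Hfrom [<- <- <-].
have Hw : w = take p w ++ (if fw0 then lhs else rhs) ++
              drop (size (if fw0 then lhs else rhs) + p) w.
  by rewrite -{1}Hfrom -drop_drop !cat_take_drop.
rewrite /rule_holds /= in Hrule.
case: fw0 Hw {Hfrom} => /= Hw; [rewrite {1}Hw | rewrite [in RHS]Hw];
  by rewrite !wordv_cat Hrule !mulrA -[_ * delta ^+ _]deltaX_comm.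
Qed.

Lemma run_sound w0 st w a b w' a' b' : run w a b st = Some (w', a', b') ->
  delta ^+ a * wv w0 = delta ^+ b * wv w -> delta ^+ a' * wv w0 = delta ^+ b' * wv w'.
Proof.
elim: st w a b => [|s st IH] w a b /=; first by case=> <- <- <-.
case Hs: (apply_step w s) => [[[w1 d] fw]|] // Hrun Hinv.
have := apply_step_sound Hs; case: fw {Hs} Hrun => Hrun Hstep; apply: (IH _ _ _ Hrun).
  by rewrite Hinv Hstep mulrA -exprD addnC.
by rewrite addnC exprD -mulrA Hinv mulrA -deltaX_comm -mulrA Hstep.
Qed.

Lemma certOK_sound src tgt st : certOK src tgt st -> wv src = wv tgt.
Proof.
rewrite /certOK; case Hrun: (run src 0 0 st) => [[[w a] b]|] // /andP [/eqP <- /eqP Hab].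
apply: (@deltaX_cancel b); rewrite -[in LHS]Hab.
by apply: run_sound Hrun _; rewrite !expr0.
Qed.

End CertificateSoundness.
(* The 48 roots of F4, each given by twice its coordinates.  Indices 0..23 are
   the positive roots, and index k + 24 is the negative of root k. *)
Definition root_coords : seq (int * int * int * int) := [:: ((0)%Z,(0)%Z,(-2)%Z,(2)%Z); ((0)%Z,(-2)%Z,(2)%Z,(0)%Z); ((0)%Z,(2)%Z,(0)%Z,(0)%Z); ((1)%Z,(-1)%Z,(-1)%Z,(-1)%Z); ((0)%Z,(-2)%Z,(0)%Z,(2)%Z); ((0)%Z,(0)%Z,(2)%Z,(0)%Z); ((1)%Z,(1)%Z,(-1)%Z,(-1)%Z); ((0)%Z,(0)%Z,(0)%Z,(2)%Z); ((0)%Z,(2)%Z,(2)%Z,(0)%Z); ((1)%Z,(-1)%Z,(1)%Z,(-1)%Z); ((0)%Z,(2)%Z,(0)%Z,(2)%Z); ((1)%Z,(-1)%Z,(-1)%Z,(1)%Z); ((1)%Z,(1)%Z,(1)%Z,(-1)%Z); ((0)%Z,(0)%Z,(2)%Z,(2)%Z); ((1)%Z,(1)%Z,(-1)%Z,(1)%Z); ((2)%Z,(0)%Z,(0)%Z,(-2)%Z); ((1)%Z,(-1)%Z,(1)%Z,(1)%Z); ((2)%Z,(0)%Z,(-2)%Z,(0)%Z); ((1)%Z,(1)%Z,(1)%Z,(1)%Z); ((2)%Z,(-2)%Z,(0)%Z,(0)%Z); ((2)%Z,(0)%Z,(0)%Z,(0)%Z); ((2)%Z,(2)%Z,(0)%Z,(0)%Z);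 ((2)%Z,(0)%Z,(2)%Z,(0)%Z); ((2)%Z,(0)%Z,(0)%Z,(2)%Z); ((0)%Z,(0)%Z,(2)%Z,(-2)%Z); ((0)%Z,(2)%Z,(-2)%Z,(0)%Z); ((0)%Z,(-2)%Z,(0)%Z,(0)%Z); ((-1)%Z,(1)%Z,(1)%Z,(1)%Z); ((0)%Z,(2)%Z,(0)%Z,(-2)%Z); ((0)%Z,(0)%Z,(-2)%Z,(0)%Z); ((-1)%Z,(-1)%Z,(1)%Z,(1)%Z); ((0)%Z,(0)%Z,(0)%Z,(-2)%Z); ((0)%Z,(-2)%Z,(-2)%Z,(0)%Z); ((-1)%Z,(1)%Z,(-1)%Z,(1)%Z); ((0)%Z,(-2)%Z,(0)%Z,(-2)%Z); ((-1)%Z,(1)%Z,(1)%Z,(-1)%Z); ((-1)%Z,(-1)%Z,(-1)%Z,(1)%Z); ((0)%Z,(0)%Z,(-2)%Z,(-2)%Z); ((-1)%Z,(-1)%Z,(1)%Z,(-1)%Z); ((-2)%Z,(0)%Z,(0)%Z,(2)%Z); ((-1)%Z,(1)%Z,(-1)%Z,(-1)%Z); ((-2)%Z,(0)%Z,(2)%Z,(0)%Z); ((-1)%Z,(-1)%Z,(-1)%Z,(-1)%Z); ((-2)%Z,(2)%Z,(0)%Z,(0)%Z); ((-2)%Z,(0)%Z,(0)%Z,(0)%Z); ((-2)%Z,(-2)%Z,(0)%Z,(0)%Z); ((-2)%Z,(0)%Z,(-2)%Z,(0)%Z); ((-2)%Z,(0)%Z,(0)%Z,(-2)%Z)].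

(* [refl_table]_j_k is the index of s_j (root k), for j = 1..4. *)
Definition refl_table : seq (seq nat) := [:: [:: 0; 0; 0; 0; 0; 0; 0; 0; 0; 0; 0; 0; 0; 0; 0; 0; 0; 0; 0; 0; 0; 0; 0; 0; 0; 0; 0; 0; 0; 0; 0; 0; 0; 0; 0; 0; 0; 0; 0; 0; 0; 0; 0; 0; 0; 0; 0; 0]; [:: 0; 1; 6; 27; 4; 9; 2; 11; 15; 5; 17; 7; 12; 19; 14; 8; 16; 10; 20; 13; 18; 21; 22; 23; 24; 25; 30; 3; 28; 33; 26; 35; 39; 29; 41; 31; 36; 43; 38; 32; 40; 34; 44; 37; 42; 45; 46; 47]; [:: 0; 8; 26; 6; 10; 5; 3; 7; 1; 12; 4; 14; 9; 13; 11; 15; 18; 17; 16; 21; 20; 19; 22; 23; 24; 32; 2; 30; 34; 29; 27; 31; 25; 36; 28; 38; 33; 37; 35; 39; 42; 41; 40; 45; 44; 43; 46; 47]; [:: 4; 25; 5; 3; 0; 2; 9; 7; 8; 6; 13; 11; 12; 10; 16; 15; 14; 19; 18; 17; 20; 22; 21; 23; 28; 1; 29; 27; 24; 26; 33; 31; 32; 30; 37; 35; 36; 34; 40; 39; 38; 43; 42; 41; 44; 46; 45; 47]; [:: 24; 4; 2; 3; 1; 7; 6; 5; 10; 11; 8; 9; 14; 13; 12; 17; 16; 15; 18; 19; 20; 21; 23; 22; 0; 28; 26; 27; 25; 31; 30; 29; 34; 35; 32; 33; 38; 37; 36; 41; 40; 39; 42; 43; 44; 45; 47; 46]].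

(* [conj_words]_k and [simple_of]_k: for a positive root k, a word u and a simple
   index i with u beta_i = root k, so that e_{root k} = u e_i u^{-1}. *)
Definition conj_words : seq (seq nat) := [:: [:: 3; 4]; [::]; [::]; [:: 2; 1]; [:: 4]; [:: 3]; [:: 1]; [:: 4; 3]; [:: 2]; [:: 3; 1]; [:: 4; 2]; [:: 4; 3; 1]; [:: 2; 3; 1]; [:: 3; 4; 2]; [:: 4; 2; 3; 1]; [:: 1; 2]; [:: 3; 4; 2; 3; 1]; [:: 4; 1; 2]; [:: 2; 3; 4; 2; 3; 1]; [:: 3; 4; 1; 2]; [:: 1; 2; 3; 4; 2; 3; 1]; [:: 2; 3; 4; 1; 2]; [:: 3; 2; 3; 4; 1; 2]; [:: 4; 3; 2; 3; 4; 1; 2]].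
Definition simple_of : seq nat := [:: 3; 3; 2; 2; 3; 2; 2; 2; 3; 2; 3; 2; 2; 3; 2; 3; 2; 3; 2; 3; 2; 3; 3; 3].

(* The index of the simple root beta_i. *)
Definition simple_root_idx : seq nat := [:: 0; 3; 2; 1; 0].

(* [conj_certs]_j_k: a rewriting certificate for r_j e_{root k} r_j = e_{s_j (root k)}. *)
Definition conj_certs : seq (seq (seq step)) := [:: [::];
 [:: [:: (0,19,false); (1,25,false); (5,19,true); (4,25,true); (2,20,false); (3,0,true)]; [:: (0,20,false); (1,0,true)]; [::]; [:: (0,37,false); (4,37,false); (2,4,true); (2,5,true)]; [:: (0,25,false); (3,25,true); (1,20,false); (2,0,true)]; [:: (0,19,false); (3,19,true)]; [:: (0,0,true); (1,0,true)]; [:: (0,25,false); (1,19,false); (5,25,true); (4,19,true)]; [::]; [:: (1,19,true); (0,0,true); (3,19,true); (2,0,true)]; [:: (1,31,true); (1,31,false); (0,25,false); (5,25,true)]; [:: (2,19,true); (1,25,true); (0,0,true); (5,25,true); (4,19,true); (3,0,true)]; [:: (2,19,true); (0,37,false); (1,6,false); (2,16,false); (7,19,false); (8,37,false); (9,6,false); (10,16,false); (5,47,false); (4,3,true); (3,6,true); (3,52,true); (4,6,true)]; [:: (2,31,true); (0,19,false); (2,31,false); (1,25,false); (7,19,true); (6,25,true)]; [:: (3,19,true); (1,31,true); (2,25,true); (2,25,false); (1,31,false); (0,25,false); (1,37,false); (2,6,false); (3,16,false); (11,25,true); (8,19,false); (9,37,false); (10,6,false); (11,16,false); (6,47,false);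 (5,3,true); (4,6,true); (4,52,true); (5,6,true)]; [:: (0,0,true); (3,0,true)]; [:: (4,19,true); (2,31,true); (3,25,true); (0,19,false); (3,25,false); (2,31,false); (1,25,false); (2,37,false); (3,6,false); (4,16,false); (13,19,true); (12,25,true); (9,19,false); (10,37,false); (11,6,false); (12,16,false); (7,47,false); (6,3,true); (5,6,true); (5,52,true); (6,6,true)]; [:: (1,25,true); (2,31,true); (0,0,true); (0,31,false); (5,25,true); (4,0,true)]; [:: (5,19,true); (3,31,true); (4,25,true); (4,25,false); (3,31,false); (5,19,false)]; [:: (2,25,true); (3,31,true); (1,19,true); (0,0,true); (1,31,false); (7,19,true); (6,25,true); (5,0,true)]; [:: (6,19,true); (4,31,true); (5,25,true); (0,0,true); (3,25,false); (2,31,false); (4,19,false); (13,0,true)]; [:: (3,25,true); (4,31,true); (2,19,true); (0,37,false); (1,6,false); (2,16,false); (3,46,false); (2,9,false); (3,22,false); (4,28,false); (12,25,false); (11,31,false); (13,19,false); (14,37,false); (12,6,false); (13,46,false); (16,16,false); (15,9,false); (16,28,false); (17,22,false); (10,9,false); (13,9,false); (11,45,true); (9,9,true); (8,6,true); (10,9,true); (9,6,true); (7,32,false); (8,3,true); (6,45,false); (8,9,true); (5,9,true)]; [:: (4,25,true); (5,31,true); (3,19,true); (0,19,false); (1,37,false); (2,6,false); (3,16,false); (4,46,false); (3,9,false); (4,22,false); (5,28,false); (17,19,true); (13,25,false); (12,31,false); (14,19,false); (15,37,false); (13,6,false); (14,46,false); (17,16,false); (16,9,false); (17,28,false); (18,22,false);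 (11,9,false); (14,9,false); (12,45,true); (10,9,true); (9,6,true); (11,9,true); (10,6,true); (8,32,false); (9,3,true); (7,45,false); (9,9,true); (6,9,true)]; [:: (5,25,true); (6,31,true); (4,19,true); (0,25,false); (1,19,false); (2,37,false); (3,6,false); (4,16,false); (5,46,false); (4,9,false); (5,22,false); (6,28,false); (19,25,true); (18,19,true); (14,25,false); (13,31,false); (15,19,false); (16,37,false); (14,6,false); (15,46,false); (18,16,false); (17,9,false); (18,28,false); (19,22,false); (12,9,false); (15,9,false); (13,45,true); (11,9,true); (10,6,true); (12,9,true); (11,6,true); (9,32,false); (10,3,true); (8,45,false); (10,9,true); (7,9,true)]];
 [:: [:: (0,6,false); (1,9,false); (11,6,false); (12,9,false); (7,9,false); (10,9,false); (8,45,true); (6,9,true); (5,6,true); (7,9,true); (6,6,true); (4,32,false); (5,3,true); (3,45,false); (5,9,true); (2,9,true)]; [::]; [:: (0,4,true); (0,5,true)]; [:: (0,3,true); (3,3,true)]; [:: (0,31,false); (3,31,true)]; [:: (0,6,false); (7,6,false); (3,47,false); (2,3,true); (1,6,true); (1,52,true); (2,6,true)]; [::]; [:: (0,31,false); (1,6,false); (7,31,true); (8,6,false); (4,47,false); (3,3,true); (2,6,true); (2,52,true); (3,6,true)]; [:: (0,3,true); (1,3,true)]; [:: (1,19,true); (1,19,false)]; [:: (1,31,true); (0,3,true); (3,31,true); (2,3,true)]; [:: (2,19,true); (1,25,true); (1,25,false); (0,31,false); (2,19,false); (7,31,true)]; [:: (2,19,true); (0,3,true); (0,19,false); (5,3,true)];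 [:: (2,31,true); (0,6,false); (1,46,false); (1,9,false); (2,28,false); (9,31,false); (10,6,false); (11,46,false); (13,9,false); (14,28,false); (8,9,false); (11,9,false); (9,45,true); (7,9,true); (6,6,true); (8,9,true); (7,6,true); (5,32,false); (6,3,true); (4,45,false); (6,9,true); (3,9,true)]; [:: (3,19,true); (1,31,true); (2,25,true); (0,3,true); (0,25,false); (1,19,false); (7,31,true); (6,3,true)]; [:: (0,37,true); (4,37,true); (2,20,false); (3,0,true)]; [:: (4,19,true); (2,31,true); (3,25,true); (3,25,false); (2,31,false); (4,19,false)]; [:: (1,25,true); (2,31,true); (0,37,true); (2,25,false); (1,31,false); (0,25,false); (7,31,true); (5,37,true); (3,20,false); (4,0,true)]; [:: (5,19,true); (3,31,true); (4,25,true); (0,3,true); (2,25,false); (1,31,false); (3,19,false); (11,3,true)]; [:: (2,25,true); (3,31,true); (1,19,true); (1,19,false); (3,31,false); (2,25,false)]; [:: (6,19,true); (4,31,true); (5,25,true); (0,37,true); (2,19,false); (5,25,false); (4,31,false); (3,25,false); (4,37,false); (5,6,false); (6,16,false); (16,37,true); (15,19,true); (14,25,true); (11,19,false); (12,37,false); (13,6,false); (14,16,false); (9,47,false); (8,3,true); (7,6,true); (7,52,true); (8,6,true)]; [:: (3,25,true); (4,31,true); (2,19,true); (0,3,true); (0,19,false); (2,31,false); (1,25,false); (9,3,true)]; [:: (4,25,true); (5,31,true); (3,19,true); (3,19,false); (0,46,true); (3,34,false); (2,16,false); (2,19,false); (5,25,false); (4,31,false); (3,25,false); (11,46,false); (10,31,true);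 (8,37,true); (6,20,false); (7,0,true)]; [:: (5,25,true); (6,31,true); (4,19,true); (0,31,false); (4,19,false); (1,46,true); (4,34,false); (3,16,false); (3,19,false); (6,25,false); (5,31,false); (4,25,false); (15,31,true); (12,46,false); (11,31,true); (9,37,true); (7,20,false); (8,0,true)]];
 [:: [:: (0,6,true); (3,6,true)]; [:: (0,7,true); (0,8,true)]; [::]; [:: (0,3,false); (1,0,false); (11,3,false); (12,0,false); (7,0,false); (10,0,false); (8,36,true); (6,0,true); (5,3,true); (7,0,true); (6,3,true); (4,17,false); (5,6,true); (3,36,false); (5,0,true); (2,0,true)]; [::]; [:: (0,6,true); (1,6,true)]; [:: (0,19,true); (0,19,false)]; [:: (0,43,false); (4,43,false); (2,29,false); (3,9,true)]; [:: (0,3,false); (7,3,false); (1,49,true); (4,3,true); (3,6,true); (2,3,true)]; [:: (1,19,true); (1,16,true); (0,6,true); (3,6,true)]; [:: (1,31,true); (1,31,false)]; [:: (2,19,true); (1,25,true); (0,19,true); (1,43,false); (0,25,false); (1,19,false); (6,43,false); (5,25,false); (3,29,false); (4,9,true)]; [:: (2,19,true); (0,3,false); (4,19,false); (1,46,true); (2,0,false); (10,3,false); (11,46,true); (13,0,false); (8,0,false); (11,0,false); (9,36,true); (7,0,true); (6,3,true); (8,0,true); (7,3,true); (5,17,false); (6,6,true); (4,36,false); (6,0,true); (3,0,true)]; [:: (2,31,true); (0,6,true); (0,31,false); (5,6,true)]; [:: (3,19,true); (1,31,true); (2,25,true); (2,25,false); (1,31,false); (3,19,false)]; [:: (0,19,true);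 (1,3,false); (7,19,false); (8,3,false); (2,49,true); (5,3,true); (4,6,true); (3,3,true)]; [:: (4,19,true); (2,31,true); (3,25,true); (0,6,true); (1,25,false); (0,31,false); (2,19,false); (9,6,true)]; [:: (1,25,true); (2,31,true); (0,19,true); (0,19,false); (2,31,false); (1,25,false)]; [:: (5,19,true); (3,31,true); (4,25,true); (0,46,false); (3,19,true); (4,43,false); (3,25,false); (2,31,false); (4,19,false); (10,31,false); (11,46,true); (9,43,false); (11,28,false); (8,25,false); (6,29,false); (7,9,true)]; [:: (2,25,true); (3,31,true); (1,19,true); (1,16,true); (0,6,true); (1,31,false); (0,25,false); (7,6,true)]; [:: (6,19,true); (4,31,true); (5,25,true); (0,19,true); (1,46,false); (4,19,true); (5,43,false); (4,25,false); (3,31,false); (5,19,false); (15,19,false); (11,31,false); (12,46,true); (10,43,false); (12,28,false); (9,25,false); (7,29,false); (8,9,true)]; [:: (3,25,true); (4,31,true); (2,19,true); (2,19,false); (4,31,false); (3,25,false)]; [:: (4,25,true); (5,31,true); (3,19,true); (0,6,true); (1,19,false); (3,31,false); (2,25,false); (11,6,true)]; [:: (5,25,true); (6,31,true); (4,19,true); (6,31,false); (0,43,false); (2,28,false); (3,22,false); (4,40,false); (3,19,false); (4,25,false); (6,3,false); (16,40,true); (15,28,true); (13,43,true); (12,19,false); (13,3,false); (7,49,true); (10,3,true); (9,6,true); (8,3,true)]];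
 [:: [:: (0,43,true); (4,43,true); (2,7,true); (2,8,true)]; [::]; [:: (0,29,false); (1,9,true)]; [:: (0,31,true); (1,25,true); (5,31,false); (4,25,false); (2,29,false); (3,9,true)]; [:: (0,9,true); (1,9,true)]; [::]; [:: (0,25,true); (3,25,false); (1,29,false); (2,9,true)]; [:: (0,9,true); (3,9,true)]; [:: (0,31,true); (0,31,false)]; [:: (1,19,true); (0,25,true); (0,25,false); (1,19,false)]; [:: (1,31,true); (1,28,true); (0,9,true); (3,9,true)]; [:: (2,19,true); (1,25,true); (1,22,true); (0,9,true); (0,19,false); (5,9,true)]; [:: (2,19,true); (0,31,true); (1,25,true); (1,25,false); (0,31,false); (2,19,false)]; [:: (2,31,true); (2,28,true); (0,43,true); (2,3,false); (8,43,true); (9,3,false); (3,49,true); (6,3,true); (5,6,true); (4,3,true)]; [:: (3,19,true); (1,31,true); (2,25,true); (2,22,true); (1,28,true); (0,9,true); (1,19,false); (7,9,true)]; [:: (0,25,true); (1,31,true); (1,31,false); (0,25,false)]; [:: (4,19,true); (2,31,true); (3,25,true); (3,22,true); (2,28,true); (0,43,true); (2,3,false); (6,19,false); (3,46,true); (4,0,false); (14,43,true); (12,3,false); (13,46,true); (15,0,false); (10,0,false); (13,0,false); (11,36,true); (9,0,true); (8,3,true); (10,0,true); (9,3,true); (7,17,false); (8,6,true); (6,36,false); (8,0,true); (5,0,true)]; [:: (1,25,true); (2,31,true); (2,28,true); (1,22,true); (0,9,true); (5,9,true)]; [:: (5,19,true); (3,31,true); (4,25,true); (0,31,true); (4,22,true);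 (3,28,true); (1,43,true); (3,3,false); (7,19,false); (4,46,true); (5,0,false); (17,28,true); (15,43,true); (13,3,false); (14,46,true); (16,0,false); (11,0,false); (14,0,false); (12,36,true); (10,0,true); (9,3,true); (11,0,true); (10,3,true); (8,17,false); (9,6,true); (7,36,false); (9,0,true); (6,0,true)]; [:: (2,25,true); (3,31,true); (1,19,true); (0,25,true); (3,28,true); (1,43,true); (0,19,false); (1,25,false); (3,3,false); (10,43,true); (9,19,false); (10,3,false); (4,49,true); (7,3,true); (6,6,true); (5,3,true)]; [:: (6,19,true); (4,31,true); (5,25,true); (0,25,true); (1,31,true); (5,22,true); (4,28,true); (2,43,true); (4,3,false); (8,19,false); (5,46,true); (6,0,false); (19,22,true); (18,28,true); (16,43,true); (14,3,false); (15,46,true); (17,0,false); (12,0,false); (15,0,false); (13,36,true); (11,0,true); (10,3,true); (12,0,true); (11,3,true); (9,17,false); (10,6,true); (8,36,false); (10,0,true); (7,0,true)]; [:: (3,25,true); (4,31,true); (2,19,true); (0,31,true); (1,25,true); (4,28,true); (2,43,true); (1,19,false); (2,25,false); (4,3,false); (13,28,true); (11,43,true); (10,19,false); (11,3,false); (5,49,true); (8,3,true); (7,6,true); (6,3,true)]; [:: (4,25,true); (5,31,true); (3,19,true); (3,19,false); (5,31,false); (4,25,false)]; [:: (5,25,true); (6,31,true); (4,19,true); (0,9,true); (2,19,false); (4,31,false); (3,25,false); (13,9,true)]]].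

(* [simple_certs]_i: a certificate that the tabulated word for beta_i reduces to e_i. *)
Definition simple_certs : seq (seq step) := [:: [::]; [:: (2,0,false); (5,0,false); (3,36,true); (1,0,true); (0,3,true); (2,0,true); (1,3,true)]; [::]; [::]; [:: (2,9,false); (5,9,false); (3,45,true); (1,9,true); (0,6,true); (2,9,true); (1,6,true)]].

(* Certificates of e_a e_b = e_b e_a for two orthogonal pairs of positive roots
   from which all others are obtained by conjugation. *)
Definition base_pair_certs : seq (nat * nat * seq step) := [:: (3,0,[:: (2,0,false); (5,0,false); (3,36,true); (1,0,true); (0,3,true); (2,0,true); (1,3,true); (3,9,false); (6,9,false); (4,45,true); (2,9,true); (1,6,true); (3,9,true); (2,6,true); (0,24,true); (1,6,false); (2,9,false); (0,6,false); (1,9,false); (3,45,false); (5,9,true); (2,9,true); (6,3,false); (7,0,false); (5,3,false); (6,0,false); (8,36,false); (10,0,true); (7,0,true)]); (1,8,[:: (0,3,false); (1,48,true); (1,12,false); (2,48,false); (0,48,true); (1,53,true); (2,12,true); (1,53,true); (0,48,false)])].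

(* Orthogonal pairs (a, b) of positive roots with commuting e_a, e_b: a base pair
   (j = 0), or s_j applied to a pair occurring earlier in the list. *)
Definition commuting_pairs : seq (nat * nat * nat) := [:: (3,0,0); (1,8,0); (6,0,2); (3,4,3); (1,15,1); (4,10,4); (2,0,1); (9,4,3); (6,10,2); (3,1,4); (8,15,2); (4,17,4); (0,13,3); (5,4,3); (12,10,2); (11,1,4); (2,17,1); (9,13,3); (6,8,4); (10,17,4); (0,19,3); (5,10,2); (7,1,4); (12,17,1); (12,13,3); (14,8,4); (5,19,3); (2,15,4); (11,13,4); (9,8,3); (13,19,3); (0,21,2); (9,17,1); (2,13,3); (7,8,4); (12,19,3); (14,15,4); (14,13,4); (16,8,3); (5,21,2); (7,19,4); (5,15,3); (11,10,3); (12,1,2); (13,21,2); (4,22,3); (6,19,3); (11,15,4); (9,21,2); (14,19,4); (16,15,3); (16,10,3); (18,1,2); (2,22,3); (7,21,4); (7,17,3); (14,4,2); (19,21,1); (10,22,3); (1,23,4); (3,21,2); (6,22,3); (11,21,4); (16,17,3); (18,15,2); (18,4,2); (20,1,1); (2,23,4); (7,22,3); (16,0,3); (17,22,3); (8,23,4); (3,22,3); (6,23,4); (11,22,3); (18,17,2); (20,8,1); (20,4,1); (18,0,3); (5,23,3); (15,23,4); (3,23,4); (9,23,3); (14,22,2); (20,10,1); (18,19,3); (20,0,3); (12,23,2); (16,21,3); (20,13,3)].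

(* For each orthogonal pair (a, b) of short positive roots: two positive E6 roots,
   written as words of reflections applied to a simple root, that project to
   root a and root b but are not orthogonal. *)
Definition lift_witnesses : seq (nat * nat * (seq nat * nat) * (seq nat * nat)) := [:: (2,5,([::],5%N),([:: 4],3%N)); (2,7,([::],5%N),([:: 3; 4],2%N)); (2,20,([::],5%N),([:: 5; 6; 4; 5; 2; 4; 3],1%N)); (3,12,([::],6%N),([:: 5; 4; 3],1%N)); (3,14,([::],6%N),([:: 6; 5; 3; 4],2%N)); (3,16,([::],6%N),([:: 6; 4; 5; 3; 4],2%N)); (5,2,([:: 4],3%N),([::],5%N)); (5,7,([:: 4],3%N),([:: 3; 4],2%N)); (5,20,([:: 4],3%N),([:: 5; 6; 4; 5; 2; 4; 3],1%N)); (6,9,([:: 3],1%N),([:: 6; 5],4%N)); (6,11,([:: 3],1%N),([:: 6; 5; 4],2%N)); (6,18,([:: 3],1%N),([:: 3; 4; 5; 2; 4; 3],1%N)); (7,2,([:: 3; 4],2%N),([::],5%N)); (7,5,([:: 3; 4],2%N),([:: 4],3%N)); (7,20,([:: 3; 4],2%N),([:: 5; 6; 4; 5; 2; 4; 3],1%N)); (9,6,([:: 6; 5],4%N),([:: 3],1%N)); (9,11,([:: 6; 5],4%N),([:: 6; 5; 4],2%N)); (9,18,([:: 6; 5],4%N),([:: 3; 4; 5; 2; 4; 3],1%N)); (11,6,([:: 6; 5; 4],2%N),([:: 3],1%N)); (11,9,([:: 6; 5; 4],2%N),([:: 6; 5],4%N)); (11,18,([:: 6; 5; 4],2%N),([::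 3; 4; 5; 2; 4; 3],1%N)); (12,3,([:: 5; 4; 3],1%N),([::],6%N)); (12,14,([:: 5; 4; 3],1%N),([:: 6; 5; 3; 4],2%N)); (12,16,([:: 5; 4; 3],1%N),([:: 6; 4; 5; 3; 4],2%N)); (14,3,([:: 6; 5; 3; 4],2%N),([::],6%N)); (14,12,([:: 6; 5; 3; 4],2%N),([:: 5; 4; 3],1%N)); (14,16,([:: 6; 5; 3; 4],2%N),([:: 6; 4; 5; 3; 4],2%N)); (16,3,([:: 6; 4; 5; 3; 4],2%N),([::],6%N)); (16,12,([:: 6; 4; 5; 3; 4],2%N),([:: 5; 4; 3],1%N)); (16,14,([:: 6; 4; 5; 3; 4],2%N),([:: 6; 5; 3; 4],2%N)); (18,6,([:: 3; 4; 5; 2; 4; 3],1%N),([:: 3],1%N)); (18,9,([:: 3; 4; 5; 2; 4; 3],1%N),([:: 6; 5],4%N)); (18,11,([:: 3; 4; 5; 2; 4; 3],1%N),([:: 6; 5; 4],2%N)); (20,2,([:: 5; 6; 4; 5; 2; 4; 3],1%N),([::],5%N)); (20,5,([:: 5; 6; 4; 5; 2; 4; 3],1%N),([:: 4],3%N)); (20,7,([:: 5; 6; 4; 5; 2; 4; 3],1%N),([:: 3; 4],2%N))].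

Definition refl_idx (j k : nat) : nat := nth 0%N (nth [::] refl_table j) k.

Definition pos_idx (k : nat) : nat := if (k < 24)%N then k else (k - 24)%N.

Definition e_word (k : nat) : seq letter :=
  let u := nth [::] conj_words k in
  map rl u ++ el (nth 0%N simple_of k) :: map rl (rev u).

Definition conj_cert (j k : nat) : seq step := nth [::] (nth [::] conj_certs j) k.

Definition simple_cert (i : nat) : seq step := nth [::] simple_certs i.

Section RootVectors.
Local Open Scope ring_scope.

Definition root_vec (k : nat) : vec4 :=
  let: (a, b, c, d) := nth (0%Z, 0%Z, 0%Z, 0%Z) root_coords k in
  V4 (a%:~R / 2%:R) (b%:~R / 2%:R) (c%:~R / 2%:R) (d%:~R / 2%:R).

Definition v4eqb (u v : vec4) : bool :=
  [&& c1 u == c1 v, c2 u == c2 v, c3 u == c3 v & c4 u == c4 v].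

Lemma v4eqbP u v : v4eqb u v -> u = v.
Proof. by case: u v => ? ? ? ? [? ? ? ?] /and4P [/= /eqP -> /eqP -> /eqP -> /eqP ->]. Qed.

(* A vector with positive inner product with every simple root. *)
Definition rho : vec4 := V4 10 1 2 3.

Lemma rho_nonneg_on_positive v : posRootF4 v -> 0 <= dot4 rho v.
Proof.
case=> _ [a1 [a2 [a3 [a4 [h1 [h2 [h3 [h4 ->]]]]]]]].
rewrite /dot4 /rho /add4 /scale4 /beta /=; lra.
Qed.

End RootVectors.

Section Lifts.
Local Open Scope ring_scope.

Definition e6_chain (c : seq nat * nat) : vec6 :=
  foldr (fun i v => refl6 (alpha i) v) (alpha c.2) c.1.

Definition v6eqb (u v : vec6) : bool :=
  [&& d1 u == d1 v, d2 u == d2 v, d3 u == d3 v, d4 u == d4 v, d5 u == d5 v & d6 u == d6 v].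

Definition pos_chain (c : seq nat * nat) : bool :=
  [&& all (fun i => (1 <= i <= 6)%N) c.1, (1 <= c.2 <= 6)%N &
      [&& 0 <= d1 (e6_chain c), 0 <= d2 (e6_chain c), 0 <= d3 (e6_chain c),
          0 <= d4 (e6_chain c), 0 <= d5 (e6_chain c) & 0 <= d6 (e6_chain c)]].

Definition lift_witnessed (k1 k2 : nat) : bool :=
  has (fun t => let: (a, b, x, y) := t in
      [&& a == k1, b == k2, pos_chain x, pos_chain y,
       v4eqb (projE6F4 (e6_chain x)) (root_vec k1),
       v4eqb (projE6F4 (e6_chain y)) (root_vec k2),
       dot6 (e6_chain x) (e6_chain y) != 0 &
       ~~ v6eqb (e6_chain x) (e6_chain y)]) lift_witnesses.

Lemma e6_chain_root l k : all (fun i => (1 <= i <= 6)%N) l -> (1 <= k <= 6)%N ->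
  rootE6 (e6_chain (l, k)).
Proof.
move=> + Hk; elim: l => [|i l IH] /=; first by move=> _; apply: rootE6_simple.
by case/andP => Hi Hl; apply: rootE6_refl => //; apply: IH.
Qed.

Lemma pos_chain_pos c : pos_chain c -> posRootE6 (e6_chain c).
Proof.
case: c => l k /and3P [Hl Hk /and5P [? ? ? ? /andP [? ?]]].
by split=> //; exact: e6_chain_root.
Qed.

(* Two witnessed roots never lie in a common admissible set: their lifts would
   both belong to the admissible E6 preimage, which consists of orthogonal roots. *)
Lemma lift_witnessed_not_admissible (X : vec4 -> Prop) k1 k2 :
  admissibleF4 X -> lift_witnessed k1 k2 -> X (root_vec k1) -> X (root_vec k2) -> False.
Proof.
case=> _ [_ [_ [Horth _]]] /hasP [[[[a b] x] y] _] /=.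
case/and4P => _ _ Px /and5P [Py Hx Hy Hdot Hne] X1 X2.
have Bx : posRootE6 (e6_chain x) /\ X (projE6F4 (e6_chain x)).
  by split; [exact: pos_chain_pos | rewrite (v4eqbP Hx)].
have By : posRootE6 (e6_chain y) /\ X (projE6F4 (e6_chain y)).
  by split; [exact: pos_chain_pos | rewrite (v4eqbP Hy)].
have Hxy : e6_chain x <> e6_chain y.
  by move=> Exy; move: Hne; rewrite Exy /v6eqb !eqxx.
by move: Hdot; rewrite (Horth _ _ Bx By Hxy) eqxx.
Qed.

End Lifts.

Definition conj_check : bool :=
  all (fun j => all (fun k =>
     [&& v4eqb (refl4 (beta j) (root_vec k)) (root_vec (refl_idx j k)),
         (refl_idx j k < 48)%N &
         certOK (rl j :: e_word (pos_idx k) ++ [:: rl j]) (e_word (pos_idx (refl_idx j k)))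
                (conj_cert j (pos_idx k))])
     (iota 0 48)) (iota 1 4).

Definition simple_check : bool :=
  all (fun i => [&& v4eqb (beta i) (root_vec (nth 0%N simple_root_idx i)),
                    (nth 0%N simple_root_idx i < 24)%N &
                    certOK (e_word (nth 0%N simple_root_idx i)) [:: el i] (simple_cert i)])
      (iota 1 4).

Definition base_certified (a b : nat) : bool :=
  has (fun x => [&& x.1.1 == a, x.1.2 == b &
                    certOK (e_word a ++ e_word b) (e_word b ++ e_word a) x.2]) base_pair_certs.
Arguments base_certified : simpl never.

Fixpoint commuting_derivable (proven : seq (nat * nat)) (l : seq (nat * nat * nat)) : bool :=
  match l with
  | [::] => true
  | (a, b, j) :: l' =>
     [&& (a < 24)%N, (b < 24)%N,
         (if j == 0%N then base_certified a b
          else [&& (1 <= j <= 4)%N & (pos_idx (refl_idx j a), pos_idx (refl_idx j b)) \in proven]) &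
         commuting_derivable ((a, b) :: proven) l']
  end.

Definition listed_pair (k1 k2 : nat) : bool :=
  has (fun t => ((t.1.1 == k1) && (t.1.2 == k2)) || ((t.1.1 == k2) && (t.1.2 == k1)))
      commuting_pairs.

Definition orthogonal_cover_check : bool :=
  all (fun k1 => all (fun k2 =>
     (dot4 (root_vec k1) (root_vec k2) == 0)%R ==> lift_witnessed k1 k2 || listed_pair k1 k2)
     (iota 0 24)) (iota 0 24).

Definition negative_half_check : bool :=
  all (fun k => (dot4 rho (root_vec k) < 0)%R) (iota 24 24).

Lemma conj_check_ok : conj_check. Proof. by vm_compute. Qed.
Lemma simple_check_ok : simple_check. Proof. by vm_compute. Qed.
Lemma commuting_derivable_ok : commuting_derivable [::] commuting_pairs. Proof. by vm_compute. Qed.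
Lemma orthogonal_cover_check_ok : orthogonal_cover_check. Proof. by vm_compute. Qed.
Lemma negative_half_check_ok : negative_half_check. Proof. by vm_compute. Qed.

Lemma conj_table j k : (1 <= j <= 4)%N -> (k < 48)%N ->
  [/\ refl4 (beta j) (root_vec k) = root_vec (refl_idx j k), (refl_idx j k < 48)%N &
      certOK (rl j :: e_word (pos_idx k) ++ [:: rl j]) (e_word (pos_idx (refl_idx j k)))
             (conj_cert j (pos_idx k))].
Proof.
move=> Hj Hk; move/allP/(_ j): conj_check_ok; rewrite mem_iota => /(_ Hj) /allP /(_ k).
by rewrite mem_iota => /(_ Hk) /and3P [/v4eqbP].
Qed.

Lemma simple_table i : (1 <= i <= 4)%N ->
  [/\ beta i = root_vec (nth 0%N simple_root_idx i), (nth 0%N simple_root_idx i < 24)%N &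
      certOK (e_word (nth 0%N simple_root_idx i)) [:: el i] (simple_cert i)].
Proof.
by move=> Hi; move/allP/(_ i): simple_check_ok; rewrite mem_iota => /(_ Hi) /and3P [/v4eqbP].
Qed.

Lemma positive_root_idx k : (k < 48)%N -> posRootF4 (root_vec k) -> (k < 24)%N.
Proof.
move=> Hk /rho_nonneg_on_positive; case: (ltnP k 24) => // Hk24.
move/allP/(_ k): negative_half_check_ok; rewrite mem_iota Hk24 => /(_ Hk).
by rewrite ltNge => /negP.
Qed.

Lemma orthogonal_pair_cases k1 k2 : (k1 < 24)%N -> (k2 < 24)%N ->
  dot4 (root_vec k1) (root_vec k2) = 0%R -> lift_witnessed k1 k2 \/ listed_pair k1 k2.
Proof.
move=> Hk1 Hk2 Horth; move/allP/(_ k1): orthogonal_cover_check_ok.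
rewrite mem_iota => /(_ Hk1) /allP /(_ k2); rewrite mem_iota => /(_ Hk2).
by rewrite Horth eqxx => /orP.
Qed.

Section RootElements.
Local Open Scope ring_scope.
Context {R : pzRingType} {delta : R} {r e : nat -> R}.
Hypothesis hunit : exists dinv : R, delta * dinv = 1 /\ dinv * delta = 1.
Hypothesis hcentral : forall x : R, delta * x = x * delta.
Hypothesis hrels : BrF4_rels delta r e.

Definition e_pos (k : nat) : R := wordv r e (e_word k).

Lemma e_pos_conj j k : (1 <= j <= 4)%N -> (k < 48)%N ->
  r j * e_pos (pos_idx k) * r j = e_pos (pos_idx (refl_idx j k)).
Proof.
move=> Hj Hk; have [_ _ Hcert] := conj_table Hj Hk.
by rewrite /e_pos -wordv_conj (certOK_sound hunit hcentral hrels Hcert).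
Qed.

Lemma e_pos_simple i : (1 <= i <= 4)%N -> e_pos (nth 0%N simple_root_idx i) = e i.
Proof.
move=> Hi; have [_ _ Hcert] := simple_table Hi.
by rewrite /e_pos (certOK_sound hunit hcentral hrels Hcert) /wordv big_seq1.
Qed.

Lemma eRoot_tabulated w i : valid_word w -> (1 <= i <= 4)%N ->
  exists k, [/\ (k < 48)%N, actW w (beta i) = root_vec k & eRoot r e w i = e_pos (pos_idx k)].
Proof.
move=> + Hi; elim: w => [_ | j w IH /andP [Hj /IH [k [Hk Hact He]]]].
  have [Hbeta Hidx _] := simple_table Hi.
  exists (nth 0%N simple_root_idx i); split => //; first exact: ltn_trans Hidx _.
  by rewrite /pos_idx Hidx e_pos_simple // /eRoot /wordR big_nil mul1r mulr1.
have [Hrefl Hk' _] := conj_table Hj Hk.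
exists (refl_idx j k); split => //; first by rewrite /= Hact.
rewrite -e_pos_conj // -He /eRoot /wordR rev_cons -cats1 big_cat big_cons big_seq1 /=.
by rewrite !mulrA.
Qed.

Lemma e_pos_conj_pos j a : (1 <= j <= 4)%N -> (a < 24)%N ->
  e_pos a = r j * e_pos (pos_idx (refl_idx j a)) * r j.
Proof.
move=> Hj Ha; have [Hrr _] := hrels.1 j Hj.
rewrite -e_pos_conj //; last exact: ltn_trans Ha _.
by rewrite /pos_idx Ha !mulrA Hrr mul1r -mulrA Hrr mulr1.
Qed.

(* Conjugation by r_j transports commutation of the pair (s_j a, s_j b) to (a, b). *)
Lemma commuting_derivable_sound l proven :
  {in proven, forall ab, e_pos ab.1 * e_pos ab.2 = e_pos ab.2 * e_pos ab.1} ->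
  commuting_derivable proven l ->
  forall a b j, (a, b, j) \in l -> e_pos a * e_pos b = e_pos b * e_pos a.
Proof.
elim: l proven => [|[[a b] j] l IH] proven Hproven //=.
case/and4P => Ha Hb Hj Hl.
have Hab : e_pos a * e_pos b = e_pos b * e_pos a.
  move: Hj; case: eqP => [_ /hasP [[[x y] c] _ /and3P [/eqP <- /eqP <- Hc]] | _ /andP [Hj Hin]].
    by have := certOK_sound hunit hcentral hrels Hc; rewrite /e_pos !wordv_cat.
  have [Hrr _] := hrels.1 j Hj; have /= Hpair := Hproven _ Hin.
  rewrite (e_pos_conj_pos Hj Ha) (e_pos_conj_pos Hj Hb) -!mulrA (mulrA (r j) (r j)) Hrr mul1r.
  by rewrite (mulrA (r j) (r j)) Hrr mul1r !mulrA -(mulrA (r j)) Hpair !mulrA.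
move=> a' b' j'; rewrite inE => /orP [/eqP [-> -> _] // | Hin].
apply: (IH ((a, b) :: proven)) Hl _ _ _ Hin => ab.
by rewrite inE => /orP [/eqP -> // | ]; exact: Hproven.
Qed.

Lemma listed_pairs_commute a b : listed_pair a b -> e_pos a * e_pos b = e_pos b * e_pos a.
Proof.
have Hsound := commuting_derivable_sound (proven := [::]) _ commuting_derivable_ok.
case/hasP => [[[x y] j] Hin /orP [] /andP [/eqP Hx /eqP Hy]]; rewrite /= in Hx Hy; subst x y.
  exact: Hsound Hin.
by symmetry; exact: Hsound Hin.
Qed.

End RootElements.

Local Open Scope ring_scope.

Theorem lemma3p4 (R : pzRingType) (delta : R) (r e : nat -> R)
  (hunit : exists dinv : R, delta * dinv = 1 /\ dinv * delta = 1)
  (hcentral : forall x : R, delta * x = x * delta)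
  (hrels : BrF4_rels delta r e)
  (g1 g2 : vec4)
  (hg1 : posRootF4 g1) (hg2 : posRootF4 g2) (horth : dot4 g1 g2 = 0)
  (hadm : exists X : vec4 -> Prop, admissibleF4 X /\ X g1 /\ X g2)
  (w1 w2 : seq nat) (i1 i2 : nat)
  (hw1 : valid_word w1) (hw2 : valid_word w2)
  (hi1 : (1 <= i1 <= 4)%N) (hi2 : (1 <= i2 <= 4)%N)
  (h1 : actW w1 (beta i1) = g1) (h2 : actW w2 (beta i2) = g2) :
  eRoot r e w1 i1 * eRoot r e w2 i2 = eRoot r e w2 i2 * eRoot r e w1 i1.
Proof.
have [k1 [Hk1 Hg1 He1]] := eRoot_tabulated hunit hcentral hrels hw1 hi1.
have [k2 [Hk2 Hg2 He2]] := eRoot_tabulated hunit hcentral hrels hw2 hi2.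
move: hg1 hg2 horth hadm; rewrite -h1 -h2 Hg1 Hg2 => hg1 hg2 horth hadm.
have Hpos1 := positive_root_idx Hk1 hg1; have Hpos2 := positive_root_idx Hk2 hg2.
rewrite He1 He2 /pos_idx Hpos1 Hpos2.
have [Hwit | Hlisted] := orthogonal_pair_cases Hpos1 Hpos2 horth.
  by case: hadm => X [hX [X1 X2]]; case: (lift_witnessed_not_admissible hX Hwit X1 X2).
exact: listed_pairs_commute hunit hcentral hrels _ _ Hlisted.
Qed.
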